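(* The mapping which associates its code to a covered map is a bijection between covered maps with $n$ edges and code-shuffles of length $2n$ (on alphabets $A_k\uplus B_l$ with $k+l=n$). Moreover, if $w$ is the code of the covered map $(M,S)$, then $w_{|A}$ is the code of the unicellular map $M_{|S}$ (on the alphabet $A_{|S|/2}$) and $w_{|B}$ is the code of the dual unicellular map $M^*_{|\bar S}$ (on the alphabet $B_{|\bar S|/2}$).
   Context: Permutations compose right to left. A map is $M=(H,\sigma,\alpha)$, $H$ finite, $\alpha$ fixed-point-free involution, $\sigma$ a permutation, $\langle\sigma,\alpha\rangle$ transitive, with root $r\in H$, considered up to root-preserving relabelling; its face-permutation is $\phi=\sigma\alpha$; unicellular means $\phi$ is cyclic (the empty map counts as unicellular). For $S\subseteq H$, $\pi_{|S}$ is obtained from the cycles of $\pi$ by erasing elements not in $S$. A covered map is $(M,S)$ with $S$ stable by $\alpha$ such that $M_{|S}=(S,\sigma_{|S},\alpha_{|S})$ is a connecting unicellular map ($\sigma_{|S},\alpha_{|S}$ transitive on $S$, $S$ meets every cycle of $\sigma$ — $S=\emptyset$ allowed if $\sigma$ has one cycle — and $\sigma_{|S}\alpha_{|S}$ cyclic). Let $\bar S=H\setminus S$ and $M^*=(H,\phi,\alpha)$; $M^*_{|\bar S}=(\bar S,\phi_{|\bar S},\alpha_{|\bar S})$. The root of $M_{|S}$ is $\sigma^i(r)$ with $i\ge0$ least such that $\sigma^i(r)\in S$; the root of $M^*_{|\bar S}$ is $\phi^j(r)$ with $j\ge0$ least such that $\phi^j(r)\in\bar S$. The motion function is $\theta(h)=\sigma\alpha(h)$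 for $h\in S$ and $\theta(h)=\sigma(h)$ otherwise; it is cyclic when $(M,S)$ is covered. Let $A_n=\{a_1,\bar a_1,\dots,a_n,\bar a_n\}$. A unicellular code on $A_n$ is a word in which each letter of $A_n$ occurs exactly once and, for $1\le i<j\le n$, $a_i$ occurs before $\bar a_i$ and before $a_j$. The code of a unicellular map with $n$ edges is the unique word $w=w_1\cdots w_{2n}$ that is a unicellular code such that after relabelling the half-edges by $A_n$ one has $\alpha(a_i)=\bar a_i$, $\phi=(w_1,\dots,w_{2n})$ and $w_1$ is the root. With $B_l=\{b_1,\bar b_1,\dots,b_l,\bar b_l\}$, a word $w$ on $A_k\uplus B_l$ is a code-shuffle if its subwords $w_{|A}$ and $w_{|B}$ consisting of letters of $A_k$, resp. $B_l$, are unicellular codes. The code of a covered map $(M,S)$ with $k=|S|/2$, $l=|\bar S|/2$ is the unique code-shuffle $w=w_1\cdots w_{2n}$ such that after relabelling the half-edges by $A_k\uplus B_l$ one has $S=A_k$, $\bar S=B_l$, $\alpha(a_i)=\bar a_i$, $\alpha(b_i)=\bar b_i$, $\theta=(w_1,\dots,w_{2n})$ and $w_1$ is the root of $M$. *)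

From mathcomp Require Import all_boot all_fingroup.
Set Implicit Arguments. Unset Strict Implicit. Unset Printing Implicit Defensive.

(* A letter of A_n is (i, b): i in 1..n, b = false for a_i and b = true for abar_i. *)
Definition ltr := (nat * bool)%type.
Definition barL (x : ltr) : ltr := (x.1, ~~ x.2).

Definition alph (n : nat) : seq ltr :=
  flatten [seq [:: (i, false); (i, true)] | i <- iota 1 n].

Definition before (u : seq ltr) (x y : ltr) : Prop := index x u < index y u.

Definition is_ucode (n : nat) (u : seq ltr) : Prop :=
  perm_eq u (alph n) /\
  (forall i, 1 <= i <= n -> before u (i, false) (i, true)) /\
  (forall i j, 1 <= i -> i < j -> j <= n -> before u (i, false) (j, false)).

(* letters of A_k (+) B_l: (false, x) is x in A, (true, x) is x in B *)
Definition sltr := (bool * ltr)%type.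
Definition barS (x : sltr) : sltr := (x.1, barL x.2).
Definition subA (w : seq sltr) : seq ltr := [seq x.2 | x <- w & ~~ x.1].
Definition subB (w : seq sltr) : seq ltr := [seq x.2 | x <- w & x.1].

Definition code_shuffle (w : seq sltr) : Prop :=
  exists k l : nat, is_ucode k (subA w) /\ is_ucode l (subB w).

Definition restr (T : finType) (p : T -> T) (S : {set T}) (x : T) : T :=
  if x \in S then head x [seq y <- traject p (p x) #|T| | y \in S] else x.

Definition first_in (T : finType) (p : T -> T) (S : {set T}) (x : T) : T :=
  head x [seq y <- traject p x #|T| | y \in S].

Definition gen_rel (T : finType) (s a : T -> T) : rel T :=
  fun x y => (y == s x) || (y == a x).

Definition is_map (H : finType) (sigma alpha : {perm H}) : Prop :=
  (forall h, alpha (alpha h) = h) /\ (forall h, alpha h != h) /\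
  (forall x y, connect (gen_rel sigma alpha) x y).

Definition theta (H : finType) (sigma alpha : {perm H}) (S : {set H}) (h : H) : H :=
  if h \in S then sigma (alpha h) else sigma h.

Definition covered (H : finType) (sigma alpha : {perm H}) (r : H) (S : {set H}) : Prop :=
  is_map sigma alpha /\
  (forall h, (alpha h \in S) = (h \in S)) /\
  (forall x y, x \in S -> y \in S ->
     connect (gen_rel (restr sigma S) (restr alpha S)) x y) /\
  (S != set0 -> forall h, exists i, iter i sigma h \in S) /\
  (S = set0 -> forall x y, fconnect sigma x y) /\
  (forall x y, x \in S -> y \in S ->
     fconnect (restr sigma S \o restr alpha S) x y).

Definition code_of (H : finType) (sigma alpha : {perm H}) (r : H) (S : {set H})
    (w : seq sltr) : Prop :=
  code_shuffle w /\
  exists f : H -> sltr,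
    injective f /\ size w = #|H| /\ (forall h, f h \in w) /\
    (forall h, (f h).1 = (h \notin S)) /\
    (forall h, f (alpha h) = barS (f h)) /\
    (forall h, f (theta sigma alpha S h) = next w (f h)) /\
    ohead w = Some (f r).

(* u is the code of the unicellular map (D, s, a) rooted at r (face perm s o a),
   on the alphabet A_{|D|/2}; empty map has the empty code *)
Definition ucode_of (T : finType) (D : {set T}) (s a : T -> T) (r : T)
    (u : seq ltr) : Prop :=
  is_ucode (#|D| %/ 2) u /\
  exists f : T -> ltr,
    {in D &, injective f} /\ size u = #|D| /\ (forall h, h \in D -> f h \in u) /\
    (forall h, h \in D -> f (a h) = barL (f h)) /\
    (forall h, h \in D -> f (s (a h)) = next u (f h)) /\
    (r \in D -> ohead u = Some (f r)).

Definition iso_covered (H1 H2 : finType)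
    (sigma1 alpha1 : {perm H1}) (r1 : H1) (S1 : {set H1})
    (sigma2 alpha2 : {perm H2}) (r2 : H2) (S2 : {set H2}) : Prop :=
  exists g : H1 -> H2, bijective g /\
    (forall h, g (sigma1 h) = sigma2 (g h)) /\
    (forall h, g (alpha1 h) = alpha2 (g h)) /\
    g r1 = r2 /\ (forall h, (g h \in S2) = (h \in S1)).

(* The motion function theta (sigma \o alpha on S, sigma off S) of a covered
   map is a cyclic permutation of the half-edges: its first returns to S are
   those of sigma_{|S} \o alpha_{|S}, which is cyclic, and off S it follows
   sigma, whose cycles all meet S.  Reading theta from the root lists every
   half-edge once; naming, inside S and inside its complement separately, each
   alpha-pair after the rank of its first occurrence is the only way to make
   both subwords unicellular codes, so the code exists and is unique, and it
   determines the map up to relabelling.  Erasing the letters outside S from the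
   cycle of theta leaves the face cycle of M_{|S}, because theta agrees with
   sigma \o alpha on S and with sigma elsewhere; erasing the letters of S leaves
   the face cycle of M*_{|Sbar}, because theta agrees with phi on S and with
   phi \o alpha elsewhere.  Conversely a code-shuffle defines a covered map on
   its positions, with alpha pairing x and bar x and theta the cyclic shift. *)

From mathcomp Require Import all_boot all_fingroup zify.
Set Implicit Arguments. Unset Strict Implicit. Unset Printing Implicit Defensive.

(** * Unicellular codes and first-occurrence labels *)

Lemma alphE n : alph n = [seq (i, b) | i <- iota 1 n, b <- [:: false; true]].
Proof. by []. Qed.

Lemma mem_alph n l : (l \in alph n) = (0 < l.1 <= n).
Proof.
case: l => i b; rewrite alphE; apply/allpairsP/idP => [[[j c] [+ _ [-> _]]]|].
  by rewrite mem_iota /=; lia.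
move=> /= h; exists (i, b); split => //; last by case: (b) h.
by rewrite mem_iota /=; lia.
Qed.

Lemma uniq_alph n : uniq (alph n).
Proof. by rewrite alphE allpairs_uniq ?iota_uniq // => -[? ?] [? ?] _ _ /= [-> ->]. Qed.

Lemma size_alph n : size (alph n) = n.*2.
Proof. by rewrite alphE size_allpairs size_iota muln2. Qed.

Lemma ucode_uniq k u : is_ucode k u -> uniq u.
Proof. by case=> pu _; rewrite (perm_uniq pu) uniq_alph. Qed.

Lemma mem_ucode k u l : is_ucode k u -> (l \in u) = (0 < l.1 <= k).
Proof. by case=> pu _; rewrite (perm_mem pu) mem_alph. Qed.

Section SeqFacts.
Variable T : eqType.
Implicit Types (P : pred T) (s : seq T).

Lemma index_map_in (U : eqType) (g : T -> U) s x :
  {in s &, injective g} -> x \in s -> index (g x) (map g s) = index x s.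
Proof.
elim: s => [//|a t IH] inj xs /=.
have -> : (g a == g x) = (a == x).
  by apply/eqP/eqP => [|->//]; apply: inj; rewrite ?mem_head.
case: eqVneq => [//|ax]; congr S; apply: IH.
  by move=> y z yt zt; apply: inj; rewrite inE ?yt ?zt orbT.
by move: xs; rewrite inE eq_sym (negbTE ax).
Qed.

Lemma next_map_in (U : eqType) (g : T -> U) s x :
  {in s &, injective g} -> x \in s -> next (map g s) (g x) = g (next s x).
Proof.
move=> inj xs; rewrite !next_nth xs (map_f g xs) (index_map_in inj xs).
case: s inj xs => [//|y t] inj xs /=.
case: (ltnP (if y == x then 0 else (index x t).+1) (size t)) => [lt|ge].
  by rewrite (nth_map y).
by rewrite !nth_default ?size_map.
Qed.

Lemma count_take_mono P s i j : i <= j -> count P (take i s) <= count P (take j s).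
Proof. by move=> ij; rewrite -(take_takel s ij) leq_count_subseq ?take_subseq. Qed.

Lemma count_take_index_lt P s x j : x \in s -> P x -> index x s < j ->
  count P (take (index x s) s) < count P (take j s).
Proof.
move=> xs Px lt; apply: leq_trans (count_take_mono P s lt).
by rewrite (take_nth x) ?index_mem // nth_index // -cats1 count_cat /= Px addn1.
Qed.

Lemma ex_count_take_index P s j : uniq s -> j < count P s ->
  exists x, [/\ x \in s, P x & count P (take (index x s) s) = j].
Proof.
elim: s j => [//|a t IH] j /= /andP[a_t ut].
have shift x : x \in t -> count P (take (index x (a :: t)) (a :: t))
                          = P a + count P (take (index x t) t).
  by move=> xt /=; case: eqVneq xt => [<-|]; rewrite ?(negbTE a_t).
case Pa: (P a) => /=.
  case: j => [_|j]; first by exists a; rewrite mem_head eqxx take0.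
  rewrite add1n ltnS => /(IH _ ut) [x [xt Px <-]].
  by exists x; rewrite inE xt orbT shift ?Pa.
rewrite add0n => /(IH _ ut) [x [xt Px <-]].
by exists x; rewrite inE xt orbT shift ?Pa.
Qed.

Lemma next_nth_uniq s x0 i : uniq s -> i < size s ->
  next s (nth x0 s i) = nth x0 s (i.+1 %% size s).
Proof.
move=> us lt_i; rewrite next_nth mem_nth // index_uniq //.
case: s us lt_i => [//|y t] /= _ lt_i; case: (ltnP i (size t)) => [lt|ge].
  by rewrite modn_small // (set_nth_default x0).
have -> : i = size t by lia.
by rewrite modnn nth_default.
Qed.

End SeqFacts.

Lemma ucode_count_take_index k u i : is_ucode k u -> 0 < i <= k ->
  count (fun l : ltr => ~~ l.2) (take (index (i, false) u) u) = i.-1.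
Proof.
move=> uc ik; have [_ [_ a_sorted]] := uc.
rewrite -size_filter -[i.-1](size_iota 1) -[size (iota _ _)](size_map (pair^~ false)).
apply: perm_size; apply: uniq_perm.
- by rewrite filter_uniq // take_uniq // (ucode_uniq uc).
- by rewrite map_inj_uniq ?iota_uniq // => a c [].
case=> j b; rewrite mem_filter /=; apply/andP/mapP => [[]|[j']].
  case: b => //= _ jt; exists j => //; have := mem_take jt.
  rewrite (mem_ucode _ uc) mem_iota /= => jk; have := index_ltn jt.
  case: (ltngtP j i) => [|ij|->]; rewrite ?ltnn //; first lia.
  by have := a_sorted i j; rewrite /before; lia.
rewrite mem_iota => j'i [-> ->]; split => //.
rewrite in_take ?(mem_ucode _ uc) /=; last lia.
by apply: a_sorted; lia.
Qed.

(* The pair {x, al x} is numbered i when its first occurrence in s is the i-th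
   first occurrence of a pair; that occurrence becomes a_i, the other abar_i. *)
Section PairLabels.
Variables (T : eqType) (al : T -> T) (s : seq T).

Definition opens x := index x s < index (al x) s.
Definition opening x := if opens x then x else al x.
Definition npairs := count opens s.
Definition pair_label x : ltr :=
  ((count opens (take (index (opening x) s) s)).+1, ~~ opens x).

Hypotheses (s_uniq : uniq s) (al_in : forall x, x \in s -> al x \in s)
  (alK : {in s, involutive al}) (al_neq : forall x, x \in s -> al x != x).

Lemma opens_al x : x \in s -> opens (al x) = ~~ opens x.
Proof.
move=> xs; rewrite /opens alK // -leqNgt ltn_neqAle.
by rewrite (inj_in_eq (index_inj x (s:=s))) ?al_in // al_neq.
Qed.

Lemma opening_al x : x \in s -> opening (al x) = opening x.
Proof. by move=> xs; rewrite /opening opens_al //; case: (opens x); rewrite ?alK. Qed.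

Lemma opening_opens x : x \in s -> opens (opening x) /\ opening x \in s.
Proof.
by move=> xs; rewrite /opening; case o: (opens x); rewrite ?opens_al ?o ?al_in.
Qed.

Lemma pair_label_al x : x \in s -> pair_label (al x) = barL (pair_label x).
Proof. by move=> xs; rewrite /pair_label /barL /= opening_al // opens_al. Qed.

Lemma pair_label_inj : {in s &, injective pair_label}.
Proof.
move=> x y xs ys [rank_eq /negb_inj opens_eq].
have [ox rx] := opening_opens xs; have [oy ry] := opening_opens ys.
have same_opening : opening x = opening y.
  case: (ltngtP (index (opening x) s) (index (opening y) s)) => [lt|lt|].
  - by have := count_take_index_lt rx ox lt; rewrite rank_eq ltnn.
  - by have := count_take_index_lt ry oy lt; rewrite rank_eq ltnn.
  - exact: index_inj.
move: same_opening; rewrite /opening opens_eq.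
by case: (opens y) => // /(congr1 al); rewrite !alK.
Qed.

Lemma pair_label_range x : x \in s -> 0 < (pair_label x).1 <= npairs.
Proof.
move=> xs; have [o r] := opening_opens xs.
by have := count_take_index_lt r o (_ : _ < size s); rewrite take_size index_mem; apply.
Qed.

Lemma ex_pair_label i : 0 < i <= npairs ->
  exists x, [/\ x \in s, opens x & pair_label x = (i, false)].
Proof.
move=> ik; have [|x [xs o c]] := @ex_count_take_index _ opens s i.-1 s_uniq.
  by rewrite /npairs in ik; lia.
by exists x; rewrite /pair_label /opening o c /=; split => //; congr pair; lia.
Qed.

Lemma index_pair_label x : x \in s -> index (pair_label x) (map pair_label s) = index x s.
Proof. exact: index_map_in pair_label_inj. Qed.

Lemma pair_label_ucode : is_ucode npairs (map pair_label s).
Proof.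
split; [|split].
- apply: uniq_perm; rewrite ?uniq_alph ?map_inj_in_uniq //; first exact: pair_label_inj.
  case=> i b; rewrite mem_alph /=; apply/mapP/idP => [[x xs e]|].
    by have := pair_label_range xs; rewrite -e.
  move/ex_pair_label => [x [xs _ e]].
  by case: b; [exists (al x); rewrite ?al_in // pair_label_al // e | exists x].
- move=> i /ex_pair_label [x [xs o e]].
  by rewrite /before -e -[(i, true)]/(barL (i, false)) -e -pair_label_al
    // !index_pair_label ?al_in.
- move=> i j i_gt0 ij jk.
  have [x [xs ox ex]] := @ex_pair_label i ltac:(lia).
  have [y [ys oy ey]] := @ex_pair_label j ltac:(lia).
  rewrite /before -ex -ey !index_pair_label // ltnNge; apply/negP => le.
  have := count_take_mono opens s le.
  by move: ex ey; rewrite /pair_label /opening ox oy => -[ei] [ej]; lia.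
Qed.

Lemma pair_label_unique k (g : T -> ltr) : is_ucode k (map g s) ->
  {in s &, injective g} -> (forall x, x \in s -> g (al x) = barL (g x)) ->
  {in s, g =1 pair_label}.
Proof.
move=> uc g_inj g_al; have [_ [a_before_abar _]] := uc.
have g_range x : x \in s -> 0 < (g x).1 <= k.
  by move=> xs; rewrite -(mem_ucode _ uc) map_f.
have idx x : x \in s -> index (g x) (map g s) = index x s := index_map_in g_inj.
have g_bar x : x \in s -> (g x).2 = ~~ opens x.
  move=> xs; have := a_before_abar _ (g_range x xs); rewrite /before.
  case ex: (g x) (g_al x xs) => [i []]; rewrite /barL /= => gal.
    by rewrite -ex -gal !idx ?al_in // /opens -leqNgt => /ltnW.
  by rewrite -ex -gal !idx ?al_in // /opens => ->.
have g_rank y : y \in s -> opens y ->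
    (g y).1 = (count opens (take (index y s) s)).+1.
  move=> ys oy; have gk := g_range y ys.
  have eg : g y = ((g y).1, false).
    by move: (g_bar y ys); rewrite oy; case: (g y) => ? ? /= ->.
  have := ucode_count_take_index uc gk; rewrite -eg idx // -map_take count_map.
  rewrite (@eq_in_count _ _ opens); first by move: gk; lia.
  by move=> z /mem_take zs /=; rewrite g_bar ?negbK.
move=> x xs; rewrite /pair_label /opening [LHS]surjective_pairing g_bar //.
case o: (opens x); first by rewrite g_rank // o.
by rewrite -g_rank ?al_in ?opens_al ?o // g_al.
Qed.

End PairLabels.

(** * Restrictions of permutations *)

Section Restriction.
Variable T : finType.
Implicit Types (p q : T -> T) (S : {set T}).

Lemma mem_traject_self p x : injective p -> x \in traject p (p x) #|T|.
Proof.
move=> p_inj; have ord_gt0 := fingraph.order_gt0 p x.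
apply/trajectP; exists (fingraph.order p x).-1; last by rewrite -iterSr prednK ?iter_order.
by rewrite prednK // -size_orbit -(card_uniqP (fingraph.orbit_uniq p x)) max_card.
Qed.

Lemma head_filter_traject_eq p q S d x n : {in ~: S, p =1 q} ->
  head d [seq y <- traject p x n | y \in S] = head d [seq y <- traject q x n | y \in S].
Proof.
move=> pq; elim: n x => [//|n IH] x /=.
by case xS: (x \in S) => //=; rewrite pq ?inE ?xS.
Qed.

Lemma first_in_eq p q S x : {in ~: S, p =1 q} -> first_in p S x = first_in q S x.
Proof. exact: head_filter_traject_eq. Qed.

Lemma restrE p S x : injective p -> x \in S -> restr p S x = first_in p S (p x).
Proof.
move=> p_inj xS; rewrite /restr /first_in xS.
have : x \in [seq y <- traject p (p x) #|T| | y \in S].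
  by rewrite mem_filter xS mem_traject_self.
by case: [seq y <- _ | _].
Qed.

Lemma restr_id p S x : x \in S -> p x \in S -> restr p S x = p x.
Proof.
move=> xS pxS; rewrite /restr xS.
have : 0 < #|T| by apply/card_gt0P; exists x.
by case: #|T| => //= n _; rewrite pxS.
Qed.

Lemma restr_in p S x : x \in S -> restr p S x \in S.
Proof.
move=> xS; rewrite /restr xS.
case e: [seq y <- _ | _] => [//|z l] /=.
have : z \in [seq y <- traject p (p x) #|T| | y \in S] by rewrite e mem_head.
by rewrite mem_filter => /andP[].
Qed.

Lemma fconnect_restr p S x : fconnect p x (restr p S x).
Proof.
rewrite /restr; case: (x \in S) => //.
case e: [seq y <- _ | _] => [|z l] /=; first exact: connect0.
have : z \in [seq y <- traject p (p x) #|T| | y \in S] by rewrite e mem_head.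
by rewrite mem_filter => /andP[_ /trajectP [i _ ->]]; rewrite -iterSr fconnect_iter.
Qed.

(* From h in P, th and ph \o al step to the same point; from there on th and
   ph agree until P is reached again. *)
Lemma restr_motion (th ph al : T -> T) (P : {set T}) : injective th -> injective ph ->
  involutive al -> (forall h, (al h \in P) = (h \in P)) ->
  {in ~: P, th =1 ph} -> {in P, th =1 ph \o al} ->
  {in P, restr ph P \o restr al P =1 restr th P}.
Proof.
move=> th_inj ph_inj alK alP off on h hP /=.
rewrite (restr_id (p:=al)) ?alP // (restrE ph_inj) ?alP // -[ph (al h)]on //.
by rewrite -(first_in_eq _ off) restrE.
Qed.

Lemma iter_eq_off p q S x i : {in ~: S, p =1 q} ->
  (forall j, j < i -> iter j q x \notin S) -> iter i p x = iter i q x.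
Proof.
move=> pq; elim: i => [//|i IH] avoid /=.
rewrite IH => [|j ji]; last exact/avoid/ltnW.
by rewrite pq // inE avoid.
Qed.

Lemma fconnect_eq_in p q (A : {pred T}) x y : {in A, p =1 q} ->
  {homo p : z / z \in A} -> x \in A -> fconnect p x y -> fconnect q x y.
Proof.
move=> pq pA xA /iter_findex <-.
suff iterA k : iter k p x \in A /\ iter k p x = iter k q x.
  by rewrite (iterA _).2 fconnect_iter.
elim: k => [//|k [kA e]] /=; split; first exact: pA.
by rewrite pq // e.
Qed.

Definition cycle_word p (s : seq T) : Prop :=
  [/\ uniq s, forall x, x \in s & forall x, next s x = p x].

Section CycleWord.
Variables (p : T -> T) (s : seq T).
Hypothesis ps : cycle_word p s.

Lemma cycle_word_size : size s = #|T|.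
Proof. by case: ps => us all_s _; rewrite -(card_uniqP us); apply: eq_card. Qed.

Lemma cycle_word_fcycle : fcycle p s.
Proof.
case: ps => us _ nx; rewrite -(@eq_cycle _ (frel (next s))) ?cycle_next //.
by move=> a b /=; rewrite nx.
Qed.

Lemma cycle_word_traject r : ohead s = Some r -> s = traject p r #|T|.
Proof.
have := cycle_word_fcycle; rewrite -cycle_word_size.
by case: (s) => [//|y t] cyc [<-]; apply: fcycle_consE.
Qed.

Lemma cycle_word_fconnect x y : fconnect p x y.
Proof. by case: ps => _ all_s _; rewrite (fconnect_cycle cycle_word_fcycle (all_s x)). Qed.

Lemma cycle_word_rot i : cycle_word p (rot i s).
Proof.
by case: ps => us all_s nx; split => [|x|x]; rewrite ?rot_uniq ?mem_rot ?next_rot.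
Qed.

End CycleWord.

Lemma next_filter_cycle_word p s S y : cycle_word p s -> y \in S ->
  next [seq z <- s | z \in S] y = restr p S y.
Proof.
move=> ps yS; have [us all_s _] := ps.
case/splitPr: (all_s y) us ps => a b us ps.
have := cycle_word_rot ps (size a); rewrite rot_size_cat => /cycle_word_fcycle cyc.
have uS := filter_uniq (mem S) us; rewrite filter_cat /= yS in uS *.
rewrite -(next_rot (size [seq z <- a | z \in S])) // rot_size_cat cat_cons.
have next_head (t : seq T) : next (y :: t) y = head y t by case: t => /=; rewrite eqxx.
rewrite next_head -filter_cat /restr yS.
have size_ba : (size (b ++ a)).+1 = #|T|.
  by rewrite -(cycle_word_size ps) !size_cat /= addnS addnC.
rewrite cat_cons in cyc; have := fcycle_rconsE cyc.
rewrite size_ba trajectS rcons_cons => -[<-].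
by rewrite filter_rcons yS; case: [seq z <- _ | _].
Qed.

Lemma cycle_word_orbit p r : injective p -> (forall x y, fconnect p x y) ->
  cycle_word p (fingraph.orbit p r) /\ ohead (fingraph.orbit p r) = Some r.
Proof.
move=> p_inj conn; split; last by rewrite /fingraph.orbit -orderSpred.
have in_orbit x : x \in fingraph.orbit p r by rewrite -fconnect_orbit.
split=> [|//|x]; first exact: fingraph.orbit_uniq.
by apply/esym/eqP/(next_cycle (fingraph.cycle_orbit p_inj r)).
Qed.

End Restriction.

(** * The motion function *)

Definition alpha_on (H : finType) (al : H -> H) (S : {set H}) h :=
  if h \in S then al h else h.

Section MotionFunction.
Variables (H : finType) (sigma alpha : {perm H}) (S : {set H}).
Hypotheses (alphaK : involutive alpha)
  (alpha_stable : forall h, (alpha h \in S) = (h \in S)).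

Lemma alpha_stableC h : (alpha h \in ~: S) = (h \in ~: S).
Proof. by rewrite !inE alpha_stable. Qed.

Lemma alpha_onK : involutive (alpha_on alpha S).
Proof.
by move=> h; rewrite /alpha_on; case hS: (h \in S); rewrite ?alpha_stable hS ?alphaK.
Qed.

Lemma thetaE : theta sigma alpha S =1 sigma \o alpha_on alpha S.
Proof. by move=> h; rewrite /theta /alpha_on /=; case: ifP. Qed.

Lemma theta_inj : injective (theta sigma alpha S).
Proof. by move=> x y; rewrite !thetaE => /perm_inj /(can_inj alpha_onK). Qed.

Lemma sigma_theta : sigma =1 theta sigma alpha S \o alpha_on alpha S.
Proof. by move=> h; rewrite /= thetaE /= alpha_onK. Qed.

Lemma theta_off : {in ~: S, theta sigma alpha S =1 sigma}.
Proof. by move=> h; rewrite inE /theta => /negbTE ->. Qed.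

Lemma theta_on : {in S, theta sigma alpha S =1 sigma \o alpha}.
Proof. by move=> h; rewrite /theta => ->. Qed.

Lemma restr_theta : {in S, restr sigma S \o restr alpha S =1 restr (theta sigma alpha S) S}.
Proof.
exact: restr_motion theta_inj (@perm_inj _ _) alphaK alpha_stable theta_off theta_on.
Qed.

Lemma covered_theta_fconnect r : covered sigma alpha r S ->
  forall x y, fconnect (theta sigma alpha S) x y.
Proof.
move=> [_ [_ [_ [meets [single cyc]]]]].
have [S0|/meets reach] := eqVneq S set0.
  move=> x y; rewrite (@eq_fconnect _ _ sigma) ?single // => h.
  by apply: theta_off; rewrite S0 !inE.
have to_S h : exists2 z, z \in S & fconnect (theta sigma alpha S) h z.
  have [i iS imin] := ex_minnP (reach h); exists (iter i sigma h) => //.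
  rewrite -(iter_eq_off theta_off) ?fconnect_iter // => j ji.
  by apply/negP => /imin; rewrite leqNgt ji.
have within_S x y : x \in S -> y \in S -> fconnect (theta sigma alpha S) x y.
  move=> xS yS; apply: connect_sub (fconnect_eq_in restr_theta _ xS (cyc x y xS yS)).
    by move=> a _ /eqP <-; apply: fconnect_restr.
  by move=> z zS /=; do 2!apply: restr_in.
move=> x y; have [zx zxS xzx] := to_S x; have [zy zyS yzy] := to_S y.
apply: (connect_trans xzx); apply: (connect_trans (within_S _ _ zxS zyS)).
by rewrite (fconnect_sym theta_inj).
Qed.

Lemma covered_of_cycle_word r s : (forall h, alpha h != h) ->
  cycle_word (theta sigma alpha S) s -> covered sigma alpha r S.
Proof.
move=> alpha_neq cw; have [us all_s _] := cw.
have gen_theta x y :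
    fconnect (theta sigma alpha S) x y -> connect (gen_rel sigma alpha) x y.
  apply: connect_sub => a _ /eqP <-; rewrite /theta.
  case: (a \in S); last by apply: connect1; rewrite /gen_rel eqxx.
  by apply: (@connect_trans _ _ (alpha a)); apply: connect1; rewrite /gen_rel eqxx ?orbT.
have cycS x y : x \in S -> y \in S -> fconnect (restr sigma S \o restr alpha S) x y.
  move=> xS yS; set sS := [seq z <- s | z \in S].
  have mem_sS z : (z \in sS) = (z \in S) by rewrite mem_filter all_s andbT.
  apply: (fconnect_eq_in (p := restr (theta sigma alpha S) S) _ _ xS).
  - by move=> z zS; rewrite restr_theta.
  - by move=> z; apply: restr_in.
  apply: (fconnect_eq_in (p := next sS) _ _ xS).
  - by move=> z zS; rewrite (next_filter_cycle_word cw).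
  - by move=> z; rewrite -!mem_sS mem_next.
  by rewrite (fconnect_cycle (cycle_next (filter_uniq _ us))) ?mem_sS.
split.
  split; first exact: alphaK.
  by split=> // x y; apply: gen_theta (cycle_word_fconnect cw x y).
split=> //; split; [|split; [|split]].
- move=> x y xS yS; apply: connect_sub (cycS x y xS yS) => a _ /eqP <- /=.
  by apply: (@connect_trans _ _ (restr alpha S a)); apply: connect1;
    rewrite /gen_rel eqxx ?orbT.
- move=> /set0Pn [z zS] h; have /iter_findex := cycle_word_fconnect cw h z.
  set k := findex _ h z => hz.
  case: (boolP [exists j : 'I_k, iter j sigma h \in S]) => [/existsP [j jS]|none].
    by exists j.
  exists k; rewrite -(iter_eq_off theta_off) ?hz // => j jk.
  by apply: contra none => jS; apply/existsP; exists (Ordinal jk).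
- move=> S0 x y; have theta_sigma : theta sigma alpha S =1 sigma.
    by move=> h; apply: theta_off; rewrite S0 !inE.
  by rewrite -(eq_fconnect theta_sigma) (cycle_word_fconnect cw).
- exact: cycS.
Qed.

End MotionFunction.

(** * Codes of covered maps *)

Section Codes.
Variable H : finType.

Lemma code_cycle_word (th : H -> H) (f : H -> sltr) w r :
  injective f -> size w = #|H| -> (forall h, f h \in w) ->
  (forall h, f (th h) = next w (f h)) -> ohead w = Some (f r) ->
  exists s, [/\ cycle_word th s, ohead s = Some r & w = map f s].
Proof.
move=> f_inj size_w f_in f_th w_head.
have uniq_fH : uniq (map f (enum H)) by rewrite map_inj_uniq ?enum_uniq.
have fH_w : {subset map f (enum H) <= w} by move=> l /mapP [h _ ->].
have w_le : size w <= size (map f (enum H)) by rewrite size_w size_map cardE.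
have [_ w_fH] := uniq_min_size uniq_fH fH_w w_le.
pose finv l := odflt r [pick h | f h == l].
have finvK l : l \in w -> f (finv l) = l.
  rewrite -w_fH => /mapP [h _ ->]; rewrite /finv.
  by case: pickP => [h' /eqP //|/(_ h)]; rewrite eqxx.
have w_map : w = map f (map finv w).
  by rewrite -map_comp -[LHS]map_id; apply/eq_in_map => l /finvK.
have us : uniq (map finv w).
  by rewrite -(map_inj_uniq f_inj) -w_map (leq_size_uniq uniq_fH fH_w w_le).
exists (map finv w); split => //.
- split=> // [x|x]; first by have := f_in x; rewrite {1}w_map mem_map.
  by apply: (f_inj); rewrite f_th -(next_map f_inj us) -w_map.
- by move: w_head; rewrite {1}w_map; case: (map finv w) => //= a _ [/f_inj ->].
Qed.

(* Erasing the letters outside P from a cycle word of th leaves a cycle word of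
   the face permutation restr ph P \o restr al P of the restriction to P. *)
Lemma ucode_of_filter (th ph al : H -> H) (P : {set H}) s r (g : H -> ltr) k :
  cycle_word th s -> ohead s = Some r -> injective th -> injective ph ->
  involutive al -> (forall h, (al h \in P) = (h \in P)) ->
  {in ~: P, th =1 ph} -> {in P, th =1 ph \o al} ->
  {in P &, injective g} -> (forall h, h \in P -> g (al h) = barL (g h)) ->
  is_ucode k (map g [seq z <- s | z \in P]) ->
  ucode_of P (restr ph P) (restr al P) (first_in ph P r) (map g [seq z <- s | z \in P]).
Proof.
move=> cw s_head th_inj ph_inj alK alP off on g_inj g_al uc.
have [us all_s _] := cw; set sP := [seq z <- s | z \in P] in uc *.
have mem_sP z : (z \in sP) = (z \in P) by rewrite mem_filter all_s andbT.
have size_sP : size sP = #|P|.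
  by rewrite -(card_uniqP (filter_uniq _ us)); apply: eq_card.
split.
  have [/perm_size] := uc; rewrite size_map size_sP size_alph => -> _.
  by rewrite divn2 doubleK.
exists g; split; [exact: g_inj | split; [by rewrite size_map | split]].
  by move=> h hP; rewrite map_f ?mem_sP.
split; first by move=> h hP; rewrite restr_id ?alP // g_al.
split.
  move=> h hP; rewrite next_map_in ?mem_sP // => [|a b]; last first.
    by rewrite !mem_sP; apply: g_inj.
  by rewrite (next_filter_cycle_word cw hP) -(restr_motion th_inj ph_inj alK alP off on hP).
rewrite -(first_in_eq _ off) /first_in -(cycle_word_traject cw s_head) -/sP.
by clear uc size_sP; case: sP mem_sP => [/(_ r) <-|z t _] //=.
Qed.

End Codes.

Lemma subA_map (H : finType) (f : H -> sltr) (S : {set H}) s :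
  (forall h, (f h).1 = (h \notin S)) ->
  subA (map f s) = [seq (f h).2 | h <- [seq z <- s | z \in S]].
Proof.
move=> f1; rewrite /subA filter_map -map_comp; congr map.
by apply: eq_filter => z /=; rewrite f1 negbK.
Qed.

Lemma subB_map (H : finType) (f : H -> sltr) (S : {set H}) s :
  (forall h, (f h).1 = (h \notin S)) ->
  subB (map f s) = [seq (f h).2 | h <- [seq z <- s | z \in ~: S]].
Proof.
move=> f1; rewrite /subB filter_map -map_comp; congr map.
by apply: eq_filter => z /=; rewrite f1 inE.
Qed.

Lemma side_label_inj (H : finType) (f : H -> sltr) (S : {set H}) :
  injective f -> (forall h, (f h).1 = (h \notin S)) ->
  {in S &, injective (fun h => (f h).2)} /\ {in ~: S &, injective (fun h => (f h).2)}.
Proof.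
move=> f_inj f_side.
have same_side a b : (a \in S) = (b \in S) -> (f a).2 = (f b).2 -> a = b.
  move=> ab e; apply: f_inj.
  by rewrite [f a]surjective_pairing [f b]surjective_pairing !f_side ab e.
split=> a b; rewrite ?inE => aS bS; apply: same_side; first by rewrite aS bS.
by rewrite (negbTE aS) (negbTE bS).
Qed.

Section CoveredCode.
Variables (H : finType) (sigma alpha : {perm H}) (S : {set H}) (r : H) (s : seq H).
Hypotheses (alphaK : involutive alpha) (alpha_neq : forall h, alpha h != h)
  (alpha_stable : forall h, (alpha h \in S) = (h \in S))
  (cw : cycle_word (theta sigma alpha S) s) (s_head : ohead s = Some r).

Lemma mem_class (P : {set H}) z : (z \in [seq z <- s | z \in P]) = (z \in P).
Proof. by case: cw => _ all_s _; rewrite mem_filter all_s andbT. Qed.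

Lemma class_word_pairs (P : {set H}) : (forall h, (alpha h \in P) = (h \in P)) ->
  let sP := [seq z <- s | z \in P] in
  [/\ uniq sP, forall x, x \in sP -> alpha x \in sP,
      {in sP, involutive alpha} & forall x, x \in sP -> alpha x != x].
Proof.
move=> alphaP; have [us _ _] := cw.
by split=> [|x|x _|x _]; rewrite ?filter_uniq ?mem_class ?alphaP.
Qed.

Lemma class_label_inj (P : {set H}) : (forall h, (alpha h \in P) = (h \in P)) ->
  {in P &, injective (pair_label alpha [seq z <- s | z \in P])}.
Proof.
move=> /class_word_pairs [uP inP KP neqP] x y; rewrite -!(mem_class P).
exact: pair_label_inj.
Qed.

Lemma class_label_alpha (P : {set H}) h : (forall h, (alpha h \in P) = (h \in P)) ->
  h \in P -> pair_label alpha [seq z <- s | z \in P] (alpha h)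
            = barL (pair_label alpha [seq z <- s | z \in P] h).
Proof.
by move=> /class_word_pairs [uP inP KP neqP]; rewrite -(mem_class P); apply: pair_label_al.
Qed.

Lemma class_label_ucode (P : {set H}) : (forall h, (alpha h \in P) = (h \in P)) ->
  let sP := [seq z <- s | z \in P] in
  is_ucode (npairs alpha sP) (map (pair_label alpha sP) sP).
Proof. by move=> /class_word_pairs [uP inP KP neqP]; apply: pair_label_ucode. Qed.

Lemma class_label_unique (P : {set H}) k (g : H -> ltr) :
  (forall h, (alpha h \in P) = (h \in P)) ->
  is_ucode k (map g [seq z <- s | z \in P]) -> {in P &, injective g} ->
  (forall h, h \in P -> g (alpha h) = barL (g h)) ->
  {in P, g =1 pair_label alpha [seq z <- s | z \in P]}.
Proof.
move=> /class_word_pairs [uP inP KP neqP] uc g_inj g_alpha x; rewrite -(mem_class P).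
apply: (pair_label_unique uP inP KP neqP uc) => [a b|a]; rewrite ?mem_class.
  exact: g_inj.
exact: g_alpha.
Qed.

Definition code_label h : sltr :=
  (h \notin S, pair_label alpha [seq z <- s | z \in if h \in S then S else ~: S] h).

Lemma code_label_inj : injective code_label.
Proof.
move=> x y e; have /negb_inj side := congr1 fst e; move: (congr1 snd e) => /=.
rewrite -side; case: ifP side => xS side.
  by apply: (class_label_inj alpha_stable); rewrite // -side.
by apply: (class_label_inj (alpha_stableC alpha_stable)); rewrite !inE ?xS -?side.
Qed.

Lemma code_label_alpha h : code_label (alpha h) = barS (code_label h).
Proof.
rewrite /code_label /barS /= alpha_stable; case: ifP => hS.
  by rewrite class_label_alpha.
by rewrite class_label_alpha ?inE ?hS //; apply: (alpha_stableC alpha_stable).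
Qed.

Lemma subA_code_label : subA (map code_label s) =
  map (pair_label alpha [seq z <- s | z \in S]) [seq z <- s | z \in S].
Proof.
rewrite (subA_map (S := S)) //; apply/eq_in_map => h.
by rewrite mem_class /code_label => ->.
Qed.

Lemma subB_code_label : subB (map code_label s) =
  map (pair_label alpha [seq z <- s | z \in ~: S]) [seq z <- s | z \in ~: S].
Proof.
rewrite (subB_map (S := S)) //; apply/eq_in_map => h.
by rewrite mem_class inE /code_label => /negbTE ->.
Qed.

Lemma code_label_code : code_of sigma alpha r S (map code_label s).
Proof.
have [us all_s next_s] := cw.
split.
  exists (npairs alpha [seq z <- s | z \in S]), (npairs alpha [seq z <- s | z \in ~: S]).
  rewrite subA_code_label subB_code_label.
  split; apply: class_label_ucode; first exact: alpha_stable.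
  exact: alpha_stableC alpha_stable.
exists code_label; split; first exact: code_label_inj.
split; first by rewrite size_map (cycle_word_size cw).
split; first by move=> h; rewrite map_f.
split=> //; split; first exact: code_label_alpha.
split; first by move=> h; rewrite (next_map code_label_inj us) next_s.
by case: (s) s_head => //= _ t [->].
Qed.

Lemma code_of_unique w : code_of sigma alpha r S w -> w = map code_label s.
Proof.
move=> [[k1 [k2 [ucA ucB]]]].
move=> [f [f_inj [size_w [f_in [f_side [f_alpha [f_theta w_head]]]]]]].
have [s' [cw' s'_head w_s']] := code_cycle_word f_inj size_w f_in f_theta w_head.
have w_s : w = map f s.
  by rewrite w_s' (cycle_word_traject cw' s'_head) -(cycle_word_traject cw s_head).
rewrite w_s (subA_map _ f_side) in ucA; rewrite w_s (subB_map _ f_side) in ucB.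
have [injA injB] := side_label_inj f_inj f_side.
have f2_alpha h : (f (alpha h)).2 = barL (f h).2 by rewrite f_alpha.
have labA := class_label_unique alpha_stable ucA injA (fun h _ => f2_alpha h).
have labB :=
  class_label_unique (alpha_stableC alpha_stable) ucB injB (fun h _ => f2_alpha h).
rewrite w_s; apply/eq_map => h; rewrite [f h]surjective_pairing f_side /code_label.
by case: ifP => hS; [rewrite labA | rewrite labB // inE hS].
Qed.

End CoveredCode.

Lemma covered_code_unique (H : finType) (sigma alpha : {perm H}) r (S : {set H}) :
  covered sigma alpha r S -> exists! w, code_of sigma alpha r S w.
Proof.
move=> cov; have [[alphaK [alpha_neq _]] [alpha_stable _]] := cov.
have [cw s_head] := cycle_word_orbit r (theta_inj alphaK alpha_stable)
  (covered_theta_fconnect alphaK alpha_stable cov).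
exists (map (code_label alpha S (fingraph.orbit (theta sigma alpha S) r))
            (fingraph.orbit (theta sigma alpha S) r)).
split=> [|w]; first exact: code_label_code.
by move/(code_of_unique alphaK alpha_neq alpha_stable cw s_head) ->.
Qed.

Lemma bij_of_same_image (H1 H2 : finType) (X : eqType) (f1 : H1 -> X) (f2 : H2 -> X) :
  injective f1 -> injective f2 ->
  (forall h, exists h2, f2 h2 = f1 h) -> (forall h, exists h1, f1 h1 = f2 h) ->
  exists2 g : H1 -> H2, bijective g & forall h, f2 (g h) = f1 h.
Proof.
move=> inj1 inj2 ex2 ex1.
have ex2b h : exists h2, f2 h2 == f1 h by have [h2 e] := ex2 h; exists h2; apply/eqP.
have ex1b h : exists h1, f1 h1 == f2 h by have [h1 e] := ex1 h; exists h1; apply/eqP.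
have gE h : f2 (xchoose (ex2b h)) = f1 h := eqP (xchooseP (ex2b h)).
have g'E h : f1 (xchoose (ex1b h)) = f2 h := eqP (xchooseP (ex1b h)).
exists (fun h => xchoose (ex2b h)) => //.
by exists (fun h => xchoose (ex1b h)) => h; [apply: inj1 | apply: inj2]; rewrite ?gE ?g'E.
Qed.

(* Labels identify half-edges; the relabelling conjugates theta and
   alpha_on, hence sigma = theta \o alpha_on as well. *)
Lemma code_of_iso (H1 H2 : finType) (sigma1 alpha1 : {perm H1}) r1 (S1 : {set H1})
    (sigma2 alpha2 : {perm H2}) r2 (S2 : {set H2}) w :
  covered sigma1 alpha1 r1 S1 -> covered sigma2 alpha2 r2 S2 ->
  code_of sigma1 alpha1 r1 S1 w -> code_of sigma2 alpha2 r2 S2 w ->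
  iso_covered sigma1 alpha1 r1 S1 sigma2 alpha2 r2 S2.
Proof.
move=> [[alphaK1 _] [stable1 _]] [[alphaK2 _] [stable2 _]].
move=> [_ [f1 [inj1 [size1 [in1 [side1 [alpha1E [theta1E head1]]]]]]]].
move=> [_ [f2 [inj2 [size2 [in2 [side2 [alpha2E [theta2E head2]]]]]]]].
have [s1 [_ _ w_s1]] := code_cycle_word inj1 size1 in1 theta1E head1.
have [s2 [_ _ w_s2]] := code_cycle_word inj2 size2 in2 theta2E head2.
have [g g_bij gE] : exists2 g : H1 -> H2, bijective g & forall h, f2 (g h) = f1 h.
  apply: bij_of_same_image => // h.
    by have := in1 h; rewrite w_s2 => /mapP [h2 _ ->]; exists h2.
  by have := in2 h; rewrite w_s1 => /mapP [h1 _ ->]; exists h1.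
have gS h : (g h \in S2) = (h \in S1) by apply: negb_inj; rewrite -side1 -side2 gE.
have g_alpha h : g (alpha1 h) = alpha2 (g h) by apply: inj2; rewrite alpha2E !gE alpha1E.
have g_alpha_on h : g (alpha_on alpha1 S1 h) = alpha_on alpha2 S2 (g h).
  by rewrite /alpha_on gS; case: ifP.
have g_theta h : g (theta sigma1 alpha1 S1 h) = theta sigma2 alpha2 S2 (g h).
  by apply: inj2; rewrite theta2E !gE theta1E.
exists g; split=> //; split.
  move=> h; rewrite (sigma_theta sigma1 alphaK1 stable1).
  by rewrite (sigma_theta sigma2 alphaK2 stable2) /= g_theta g_alpha_on.
split=> //; split=> //.
by apply: inj2; rewrite gE; move: head1; rewrite head2 => -[].
Qed.

Lemma code_of_subwords (H : finType) (sigma alpha : {perm H}) r (S : {set H}) w :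
  covered sigma alpha r S -> code_of sigma alpha r S w ->
  ucode_of S (restr sigma S) (restr alpha S) (first_in sigma S r) (subA w) /\
  ucode_of (~: S) (restr (sigma \o alpha) (~: S)) (restr alpha (~: S))
           (first_in (sigma \o alpha) (~: S) r) (subB w).
Proof.
move=> [[alphaK _] [stable _]].
move=> [[kA [kB [ucA ucB]]]].
move=> [f [f_inj [size_w [f_in [f_side [f_alpha [f_theta w_head]]]]]]].
have [s [cw s_head w_s]] := code_cycle_word f_inj size_w f_in f_theta w_head.
rewrite w_s (subA_map _ f_side) (subB_map _ f_side) in ucA ucB *.
have [injA injB] := side_label_inj f_inj f_side.
have th_inj : injective (theta sigma alpha S) by exact: theta_inj alphaK stable.
split.
  apply: (ucode_of_filter cw s_head th_inj (@perm_inj _ sigma) alphaK stable) ucA.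
  - exact: theta_off.
  - exact: theta_on.
  - exact: injA.
  - by move=> h _; rewrite f_alpha.
have sa_inj : injective (sigma \o alpha) by apply: inj_comp; apply: perm_inj.
apply: (ucode_of_filter cw s_head th_inj sa_inj alphaK (alpha_stableC stable)) ucB.
- by move=> h; rewrite !inE negbK => /theta_on.
- by move=> h hS; rewrite theta_off //= alphaK.
- exact: injB.
- by move=> h _; rewrite f_alpha.
Qed.

(** * The covered map of a code-shuffle *)

Lemma barSK : involutive barS.
Proof. by case=> c [i b]; rewrite /barS /barL /= negbK. Qed.

Lemma barS_neq l : barS l != l.
Proof. by case: l => c [i b]; rewrite /barS /barL /= !xpair_eqE !eqxx /=; case: b. Qed.

Lemma mem_subA (w : seq sltr) x : (x \in subA w) = ((false, x) \in w).
Proof.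
apply/mapP/idP => [[[[] y]]|xw]; last by exists (false, x); rewrite ?mem_filter.
  by rewrite mem_filter.
by rewrite mem_filter => /= yw ->.
Qed.

Lemma mem_subB (w : seq sltr) x : (x \in subB w) = ((true, x) \in w).
Proof.
apply/mapP/idP => [[[[] y]]|xw]; last by exists (true, x); rewrite ?mem_filter.
  by rewrite mem_filter => /= yw ->.
by rewrite mem_filter.
Qed.

Lemma code_shuffle_uniq w : code_shuffle w -> uniq w.
Proof.
case=> k [l [/ucode_uniq uA /ucode_uniq uB]]; elim: w uA uB => [//|[c x] t IH].
rewrite /subA /subB /=; case: c => /= [uA /andP[xB uB]|/andP[xA uA] uB].
  by rewrite IH // andbT; apply: contra xB => xt; rewrite mem_subB.
by rewrite IH // andbT; apply: contra xA => xt; rewrite mem_subA.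
Qed.

Lemma code_shuffle_barS w l : code_shuffle w -> l \in w -> barS l \in w.
Proof.
case=> k [k' [ucA ucB]]; case: l => [[] x]; rewrite /barS /=.
  by rewrite -!mem_subB !(mem_ucode _ ucB).
by rewrite -!mem_subA !(mem_ucode _ ucA).
Qed.


(* The map encoded by a code-shuffle w lives on the positions of w: alpha
   exchanges the positions of x and bar x, and sigma is chosen so that the
   motion function is the cyclic shift. *)
Section ShuffleMap.
Variable w : seq sltr.
Hypothesis w_code : code_shuffle w.

Definition letter (i : 'I_(size w)) : sltr := nth (false, (0, false)) w i.

Lemma letter_inj : injective letter.
Proof.
move=> i j /eqP; rewrite /letter nth_uniq ?code_shuffle_uniq //.
by move/eqP; apply: val_inj.
Qed.

Lemma index_bar_letter i : index (barS (letter i)) w < size w.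
Proof. by rewrite index_mem code_shuffle_barS ?mem_nth. Qed.

Definition bar_position i : 'I_(size w) := Ordinal (index_bar_letter i).

Lemma letter_bar_position i : letter (bar_position i) = barS (letter i).
Proof. by rewrite /letter nth_index // code_shuffle_barS ?mem_nth. Qed.

Lemma bar_position_inj : injective bar_position.
Proof.
move=> i j e; apply: letter_inj; apply: (can_inj barSK).
by rewrite -!letter_bar_position e.
Qed.

Definition shuffle_alpha : {perm 'I_(size w)} := perm bar_position_inj.
Definition shuffle_S : {set 'I_(size w)} := [set i | ~~ (letter i).1].

Lemma letter_alpha i : letter (shuffle_alpha i) = barS (letter i).
Proof. by rewrite permE letter_bar_position. Qed.

Lemma shuffle_alphaK : involutive shuffle_alpha.
Proof. by move=> i; apply: letter_inj; rewrite !letter_alpha barSK. Qed.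

Lemma shuffle_alpha_neq i : shuffle_alpha i != i.
Proof. by apply: contraNneq (barS_neq (letter i)) => e; rewrite -letter_alpha e. Qed.

Lemma shuffle_alpha_stable i : (shuffle_alpha i \in shuffle_S) = (i \in shuffle_S).
Proof. by rewrite !inE letter_alpha. Qed.

Lemma shuffle_alpha_onK : involutive (alpha_on shuffle_alpha shuffle_S).
Proof. exact: alpha_onK shuffle_alphaK shuffle_alpha_stable. Qed.

Lemma shuffle_sigma_inj : injective (@ordS (size w) \o alpha_on shuffle_alpha shuffle_S).
Proof. by apply: inj_comp; [apply: ordS_inj | apply: can_inj shuffle_alpha_onK]. Qed.

Definition shuffle_sigma : {perm 'I_(size w)} := perm shuffle_sigma_inj.

Lemma theta_shuffle : theta shuffle_sigma shuffle_alpha shuffle_S =1 @ordS (size w).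
Proof.
by move=> i; rewrite (thetaE shuffle_sigma) /= permE /= shuffle_alpha_onK.
Qed.

Lemma letter_ordS i : letter (ordS i) = next w (letter i).
Proof. by rewrite /letter next_nth_uniq ?code_shuffle_uniq. Qed.

Lemma map_letter_enum : w = map letter (enum 'I_(size w)).
Proof.
rewrite -[RHS]/(map (nth (false, (0, false)) w \o val) _) map_comp val_enum_ord.
by rewrite -/(mkseq _ _) mkseq_nth.
Qed.

Lemma shuffle_cycle_word :
  cycle_word (theta shuffle_sigma shuffle_alpha shuffle_S) (enum 'I_(size w)).
Proof.
split=> [|i|i]; rewrite ?enum_uniq ?mem_enum //.
apply: letter_inj; rewrite theta_shuffle letter_ordS.
by rewrite -(next_map letter_inj) ?enum_uniq // -map_letter_enum.
Qed.

Lemma shuffle_covered r : covered shuffle_sigma shuffle_alpha r shuffle_S.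
Proof.
apply: (covered_of_cycle_word shuffle_alphaK shuffle_alpha_stable r shuffle_alpha_neq).
exact: shuffle_cycle_word.
Qed.

Lemma shuffle_code (w_gt0 : 0 < size w) :
  code_of shuffle_sigma shuffle_alpha (Ordinal w_gt0) shuffle_S w.
Proof.
split=> //; exists letter; split; first exact: letter_inj.
split; first by rewrite card_ord.
split; first by move=> i; apply: mem_nth.
split; first by move=> i; rewrite inE negbK.
split; first exact: letter_alpha.
split; first by move=> i; rewrite theta_shuffle letter_ordS.
by rewrite /letter; case: (w) w_gt0.
Qed.

End ShuffleMap.
Theorem mainTheorem8 (n : nat) :
  (forall (H : finType) (sigma alpha : {perm H}) (r : H) (S : {set H}),
     covered sigma alpha r S -> #|H| = n.*2 ->
     exists! w, code_of sigma alpha r S w) /\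
  (forall (H1 H2 : finType) (sigma1 alpha1 : {perm H1}) (r1 : H1) (S1 : {set H1})
          (sigma2 alpha2 : {perm H2}) (r2 : H2) (S2 : {set H2}) (w : seq sltr),
     covered sigma1 alpha1 r1 S1 -> #|H1| = n.*2 ->
     covered sigma2 alpha2 r2 S2 -> #|H2| = n.*2 ->
     code_of sigma1 alpha1 r1 S1 w -> code_of sigma2 alpha2 r2 S2 w ->
     iso_covered sigma1 alpha1 r1 S1 sigma2 alpha2 r2 S2) /\
  (0 < n -> forall w : seq sltr, code_shuffle w -> size w = n.*2 ->
     exists (H : finType) (sigma alpha : {perm H}) (r : H) (S : {set H}),
       covered sigma alpha r S /\ #|H| = n.*2 /\ code_of sigma alpha r S w) /\
  (forall (H : finType) (sigma alpha : {perm H}) (r : H) (S : {set H}) (w : seq sltr),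
     covered sigma alpha r S -> #|H| = n.*2 -> code_of sigma alpha r S w ->
     ucode_of S (restr sigma S) (restr alpha S) (first_in sigma S r) (subA w) /\
     ucode_of (~: S) (restr (sigma \o alpha) (~: S)) (restr alpha (~: S))
              (first_in (sigma \o alpha) (~: S) r) (subB w)).
Proof.
split; first by move=> H sigma alpha r S cov _; apply: covered_code_unique.
split; first by move=> H1 H2 ? ? ? ? ? ? ? ? w c1 _ c2 _; apply: code_of_iso.
split; last by move=> H sigma alpha r S w cov _; apply: code_of_subwords.
move=> n_gt0 w w_code size_w; have w_gt0 : 0 < size w by rewrite size_w double_gt0.
exists 'I_(size w), (shuffle_sigma w_code), (shuffle_alpha w_code), (Ordinal w_gt0).
exists (shuffle_S w); split; first exact: shuffle_covered.
by split; [rewrite card_ord | apply: shuffle_code].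
Qed.
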